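(* Let $\Omega$ be a vector space over $\mathbb{K}$, $E$ a non-trivial locally convex Hausdorff space over $\mathbb{K}$ and $\mathcal{FV}(\Omega)$ a dom-space such that $\mathcal{FV}(\Omega)\subset\mathcal{L}(\Omega)$ as a linear subspace. Then $S(u)\in\mathcal{L}(\Omega,E)$ for all $u\in\mathcal{FV}(\Omega)\varepsilon E$.
   Context: $\mathbb{K}\in\{\mathbb{R},\mathbb{C}\}$; $\mathcal{L}(\Omega,E)$ is the space of linear maps $\Omega\to E$, $\mathcal{L}(\Omega):=\mathcal{L}(\Omega,\mathbb{K})$. Framework: $J,M$ non-empty index sets, $(\omega_m)_{m\in M}$ non-empty sets, $\nu_{j,m}\colon\omega_m\to[0,\infty)$ such that for all $m$, $x\in\omega_m$ some $\nu_{j,m}(x)>0$; $\operatorname{AP}(\Omega)\subset\mathbb{K}^\Omega$ a linear subspace; $T_m\colon\operatorname{dom}T_m\to\mathbb{K}^{\omega_m}$ linear maps on linear subspaces of $\mathbb{K}^\Omega$; $\mathcal{FV}(\Omega):=\{f\in\operatorname{AP}(\Omega)\cap\bigcap_m\operatorname{dom}T_m: |f|_{j,m}:=\sup_{x\in\omega_m}|T_m(f)(x)|\nu_{j,m}(x)<\infty\ \forall j,m\}$ with these seminorms. It is a dom-space if it is Hausdorff, the seminorms are directed and every $\delta_x\colon f\mapsto f(x)$, $x\in\Omega$, belongs to $\mathcal{FV}(\Omega)'$. $\mathcal{FV}(\Omega)\varepsilon E$: continuous linear maps from $\mathcal{FV}(\Omega)'$ (topology of uniform convergence on absolutely convex compact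 sets) to $E$, with the topology of uniform convergence on equicontinuous sets; $S(u)(x):=u(\delta_x)$. *)

From mathcomp Require Import all_boot all_algebra.
From mathcomp Require Import all_classical all_reals all_analysis.
From mathcomp Require Import complex.
Import numFieldTopology.Exports.
Import GRing.Theory Num.Theory.

Set Implicit Arguments.
Unset Strict Implicit.
Unset Printing Implicit Defensive.

Local Open Scope classical_set_scope.
Local Open Scope ring_scope.

(** The scalar field K ∈ {R, C}: [KK R true] = R, [KK R false] = C = R[i]. *)
Definition KK (R : realType) (b : bool) : numFieldType :=
  if b then (R : numFieldType) else (R[i] : numFieldType).

(** Propositional membership in a finite list (no decidable equality needed). *)
Fixpoint memP (T : Type) (x : T) (s : seq T) : Prop :=
  match s with nil => False | y :: s' => y = x \/ memP x s' end.

Section Framework.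
Variable K : numFieldType.
Variable Omega : lmodType K.

Definition lin_subspace (A : set (Omega -> K)) : Prop :=
  A (fun _ => 0) /\
  forall (a : K) (f g : Omega -> K), A f -> A g -> A (fun x => a * f x + g x).

(** The general framework (J, M, omega_m, nu_{j,m}, AP(Omega), T_m). The weights
    nu_{j,m} take values in [0, oo), viewed inside K (nonnegative reals). *)
Unset Implicit Arguments.
Record framework := Framework {
  fJ : Type;
  fM : Type;
  fomega : fM -> Type;
  fnu : forall m : fM, fJ -> fomega m -> K;
  fAP : set (Omega -> K);
  fdomT : fM -> set (Omega -> K);
  fT : forall m : fM, (Omega -> K) -> (fomega m -> K);
  fJ_ne : inhabited fJ;
  fM_ne : inhabited fM;
  fomega_ne : forall m, inhabited (fomega m);
  fnu_ge0 : forall (m : fM) (j : fJ) (x : fomega m), 0 <= fnu m j x;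
  fnu_pos : forall (m : fM) (x : fomega m), exists j, 0 < fnu m j x;
  fAP_lin : lin_subspace fAP;
  fdomT_lin : forall m, lin_subspace (fdomT m);
  fT_lin : forall m (a : K) (f g : Omega -> K), fdomT m f -> fdomT m g ->
    fT m (fun x => a * f x + g x) = (fun y => a * fT m f y + fT m g y)
}.
Set Implicit Arguments.

Variable F : framework.

(** [bnd j m f c] : c is an upper bound of { |T_m(f)(x)| nu_{j,m}(x) : x ∈ omega_m },
    i.e. |f|_{j,m} <= c. *)
Definition bnd (j : fJ F) (m : fM F) (f : Omega -> K) (c : K) : Prop :=
  forall x : fomega F m, `|fT F m f x| * fnu F m j x <= c.

Definition FV : set (Omega -> K) :=
  fun f => fAP F f /\ (forall m, fdomT F m f) /\
           (forall j m, exists c : K, bnd j m f c).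

Definition FVt := {f : Omega -> K | FV f}.

Definition sball (L : seq (fJ F * fM F)) (eps : K) (f : FVt) : set FVt :=
  fun g => forall p, memP p L ->
    exists c, c < eps /\ bnd p.1 p.2 (fun x => proj1_sig g x - proj1_sig f x) c.

Definition FVopen (U : set FVt) : Prop :=
  forall f, U f -> exists (L : seq (fJ F * fM F)) (eps : K),
    0 < eps /\ sball L eps f `<=` U.

Definition FV_hausdorff : Prop :=
  forall f g : FVt, f <> g -> exists U V : set FVt,
    [/\ FVopen U, FVopen V, U f, V g & U `&` V = set0].

Definition FV_directed : Prop :=
  forall (j1 j2 : fJ F) (m1 m2 : fM F), exists (j3 : fJ F) (m3 : fM F) (C : K),
    0 < C /\ forall f c, FV f -> bnd j3 m3 f c ->
      bnd j1 m1 f (C * c) /\ bnd j2 m2 f (C * c).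

Definition FVlinear (y : FVt -> K) : Prop :=
  forall (a : K) (f g h : FVt),
    proj1_sig h = (fun x => a * proj1_sig f x + proj1_sig g x) ->
    y h = a * y f + y g.

Definition FVdual (y : FVt -> K) : Prop :=
  FVlinear y /\ forall V : set K, open V -> FVopen (y @^-1` V).

Definition delta (x : Omega) : FVt -> K := fun f => proj1_sig f x.

Definition dom_space : Prop :=
  [/\ FV_hausdorff, FV_directed & forall x : Omega, FVdual (delta x)].

Definition abs_convex (A : set FVt) : Prop :=
  forall (a b : K) (f g h : FVt), A f -> A g -> `|a| + `|b| <= 1 ->
    proj1_sig h = (fun x => a * proj1_sig f x + b * proj1_sig g x) -> A h.

Definition FVcompact (A : set FVt) : Prop :=
  forall (I : Type) (U : I -> set FVt), (forall i, FVopen (U i)) ->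
    A `<=` (fun f => exists i, U i f) ->
    exists s : seq I, A `<=` (fun f => exists2 i, memP i s & U i f).

(** The topology kappa on FV(Omega)' of uniform convergence on absolutely convex
    compact sets (open sets are subsets of FV(Omega)'). *)
Definition kappa_open (W : set (FVt -> K)) : Prop :=
  forall y, W y -> FVdual y /\
    exists (As : seq (set FVt)) (eps : K),
      [/\ 0 < eps, (forall A, memP A As -> abs_convex A /\ FVcompact A) &
          (fun z => FVdual z /\ forall A, memP A As ->
                      forall f, A f -> `|z f - y f| < eps) `<=` W].

(** FV(Omega) ε E : continuous linear maps FV(Omega)'_kappa -> E. *)
Definition eps_prod (E : tvsType K) (u : (FVt -> K) -> E) : Prop :=
  (forall (a : K) (y z : FVt -> K), FVdual y -> FVdual z ->
     u (fun f => a * y f + z f) = a *: u y + u z) /\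
  (forall V : set E, open V -> kappa_open (FVdual `&` u @^-1` V)).

Definition S (E : tvsType K) (u : (FVt -> K) -> E) : Omega -> E :=
  fun x => u (delta x).

Definition linfun_K (f : Omega -> K) : Prop :=
  forall (a : K) (x y : Omega), f (a *: x + y) = a * f x + f y.

End Framework.

From mathcomp Require Import all_boot all_algebra.
From mathcomp Require Import all_classical all_reals all_analysis.
From mathcomp Require Import complex.
Import numFieldTopology.Exports.
Local Open Scope classical_set_scope.
Local Open Scope ring_scope.

(* Since every f in FV(Omega) is linear, x |-> delta_x is a linear map
   Omega -> FV(Omega)'; composing it with u, which is linear on FV(Omega)',
   gives S(u). *)

Section SLinear.
Variables (K : numFieldType) (Omega : lmodType K) (F : framework K Omega).
Variables (E : tvsType K) (u : (FVt F -> K) -> E).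
Hypothesis FV_linfun : forall f, FV F f -> linfun_K f.
Hypothesis delta_dual : forall x : Omega, FVdual (delta x : FVt F -> K).
Hypothesis u_eps : eps_prod u.

Lemma delta_linear (a : K) (x y : Omega) :
  delta (a *: x + y) = (fun f : FVt F => a * delta x f + delta y f).
Proof. by apply: funext => f; apply: (FV_linfun _ (proj2_sig f)). Qed.

Lemma S_linear (a : K) (x y : Omega) : S u (a *: x + y) = a *: S u x + S u y.
Proof.
rewrite /S delta_linear.
by apply: u_eps.1; [case: (delta_dual x) | case: (delta_dual y)].
Qed.

End SLinear.

Theorem proposition4p14 (R : realType) (b : bool)
  (Omega : lmodType (KK R b)) (E : tvsType (KK R b))
  (F : framework (KK R b) Omega) :
  hausdorff_space E -> (exists e : E, e != 0) ->
  dom_space F ->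
  (forall f, FV F f -> linfun_K f) ->
  forall u : (FVt F -> KK R b) -> E, eps_prod u ->
  forall (a : KK R b) (x y : Omega), S u (a *: x + y) = a *: S u x + S u y.
Proof.
move=> _ _ [_ _ delta_dual] FV_linfun u u_eps a x y.
exact: S_linear FV_linfun delta_dual u_eps a x y.
Qed.
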